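(* Fix an integer $\Delta\ge3$. For $k\ge1$ let $T_k$ be the $(\Delta-1)$-ary tree of depth $k$, and let $\mathcal{T}=\{T_k: k\ge1\}$. Then for every real $d>1$, $\mu_{\log}(\mathcal{T})\le d$.
   Context: The $(\Delta-1)$-ary tree of depth $k$ is the rooted tree in which every vertex at depth less than $k$ has exactly $\Delta-1$ children and all leaves are at depth $k$. A self-avoiding walk (SAW) of length $i$ from $v$ is a walk $v=v_0,\dots,v_i$ with all vertices distinct; $\mathcal{N}_{\le \ell}(G,v)$ is the number of SAWs of length between $1$ and $\ell$ starting at $v$. For a family $\mathcal{H}$ of finite graphs, ''$\mu_{\log}(\mathcal{H})\le d$'' (log-depth connective constant at most $d$) means: there exist constants $a,c$ such that for every $G=(V,E)\in\mathcal{H}$, every $v\in V$, and every $\ell\ge a\log|V|$, one has $\mathcal{N}_{\le\ell}(G,v)\le c\,d^{\ell}$. *)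

From mathcomp Require Import all_boot.
From Stdlib Require Import Reals.
Set Implicit Arguments. Unset Strict Implicit. Unset Printing Implicit Defensive.

Record fgraph := FGraph { fg_V : finType; fg_e : rel fg_V }.

(* Number of self-avoiding walks of length exactly i starting at v:
   walks v = v_0, v_1, ..., v_i (encoded by the i-tuple (v_1,...,v_i)),
   consecutive vertices adjacent, all i+1 vertices distinct. *)
Definition nSAW (G : fgraph) (v : fg_V G) (i : nat) : nat :=
  #|[set t : i.-tuple (fg_V G) | path (@fg_e G) v t && uniq (v :: t)]|.

Definition N_le (G : fgraph) (v : fg_V G) (l : nat) : nat :=
  \sum_(1 <= i < l.+1) nSAW v i.

Definition mu_log_le (H : fgraph -> Prop) (d : R) : Prop :=
  exists a c : R, forall G : fgraph, H G ->
    forall (v : fg_V G) (l : nat),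
      (a * ln (INR #|fg_V G|) <= INR l)%R ->
      (INR (N_le v l) <= c * d ^ l)%R.

(* The b-ary tree of depth k: vertices are words over 'I_b of length <= k
   (the root is the empty word); w is a child of u iff w = u ++ [:: x]. *)
Definition tree_vertex (b k : nat) : finType := {n : 'I_k.+1 & n.-tuple 'I_b}.

Definition word (b k : nat) (x : tree_vertex b k) : seq 'I_b := tagged x.

Definition is_child (T : eqType) (u w : seq T) : bool :=
  (size w == (size u).+1) && (take (size u) w == u).

Definition tree_adj (b k : nat) : rel (tree_vertex b k) :=
  fun x y => is_child (word x) (word y) || is_child (word y) (word x).

Definition tree_graph (b k : nat) : fgraph := @FGraph (tree_vertex b k) (@tree_adj b k).

(* A self-avoiding walk in a tree is determined by its length and its
   endpoint: it climbs from its start to the common ancestor and then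
   descends.  Hence a tree on n vertices has at most n self-avoiding walks of
   each length from a given vertex, and none of length n or more, so
   N_{<=l}(T_k, v) <= n^2, which is at most d^l as soon as l >= (2 / ln d) ln n. *)

From Pilot Require Import Defs.
From mathcomp Require Import all_boot zify.
From Stdlib Require Import Reals Lra.
Set Implicit Arguments. Unset Strict Implicit.

Lemma nSAW_eq0 (G : Defs.fgraph) (v : fg_V G) i : #|fg_V G| <= i -> nSAW v i = 0.
Proof.
move=> card_le_i; apply/eqP; rewrite cards_eq0; apply/eqP/setP => t.
rewrite !inE; apply/negbTE/negP => /andP[_ /card_uniqP uniq_vt].
have := max_card (mem (v :: t)).
by rewrite uniq_vt /= size_tuple ltnNge card_le_i.
Qed.

Lemma nSAW_le_card (G : Defs.fgraph) (v : fg_V G) i :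
  {in [set t : i.-tuple (fg_V G) | path (@fg_e G) v t && uniq (v :: t)] &,
     injective (fun t : i.-tuple (fg_V G) => last v t)} ->
  nSAW v i <= #|fg_V G|.
Proof. by move=> last_inj; rewrite /nSAW -(card_in_imset last_inj) max_card. Qed.

Lemma sum_nat_bounded_support (F : nat -> nat) n m p :
  (forall i, F i <= n) -> (forall i, n <= i -> F i = 0) ->
  \sum_(m <= i < p) F i <= minn p n * n.
Proof.
move=> F_le F_eq0; elim: p => [|p IHp]; first by rewrite big_geq.
have [m_le_p | p_lt_m] := leqP m p; last by rewrite big_geq.
rewrite big_nat_recr //=.
have [p_lt_n | n_le_p] := ltnP p n.
- have := F_le p; move: IHp.
  have -> : minn p n = p by lia.
  have -> : minn p.+1 n = p.+1 by lia.
  rewrite mulSn; lia.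
- rewrite F_eq0 // addn0; apply: leq_trans IHp _.
  by apply: leq_mul => //; lia.
Qed.

Section WordTree.
Variable T : eqType.
Implicit Types u w x y : seq T.

Definition word_adj : rel (seq T) := fun x y => is_child x y || is_child y x.

Lemma is_child_size u w : is_child u w -> size w = (size u).+1.
Proof. by case/andP => /eqP. Qed.

Lemma is_child_take u w : is_child u w -> take (size u) w = u.
Proof. by case/andP => _ /eqP. Qed.

Lemma is_child_parent_eq x y u : is_child x u -> is_child y u -> x = y.
Proof.
move=> xu yu; have size_xy : size x = size y.
  by have := is_child_size xu; rewrite (is_child_size yu) => -[].
by rewrite -(is_child_take xu) -(is_child_take yu) size_xy.
Qed.

Lemma size_last_word_path u s : path word_adj u s -> size (last u s) <= size u + size s.
Proof.
elim: s u => [|x s IHs] u /=; first by rewrite addn0.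
case/andP => ux /IHs; case/orP: ux => /is_child_size; lia.
Qed.

Lemma descending_path_last w s : path (@is_child T) w s ->
  size (last w s) = size w + size s /\ take (size w) (last w s) = w.
Proof.
elim: s w => [|x s IHs] w /=; first by rewrite addn0 take_size.
case/andP => wx /IHs[size_last take_last]; have size_x := is_child_size wx.
split; first by rewrite size_last size_x addSnnS.
by rewrite -(take_takel _ (leqnSn (size w))) -size_x take_last is_child_take.
Qed.

(* Stepping back up would revisit the parent u, since parents are unique. *)
Lemma saw_descends u w s : is_child u w -> path word_adj w s -> uniq (u :: w :: s) ->
  path (@is_child T) w s.
Proof.
elim: s u w => [|x s IHs] u w //= uw /andP[wx ws] /andP[u_notin uniq_ws].
case/orP: wx => [wx | xw]; first by rewrite wx /=; apply: IHs wx ws uniq_ws.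
by move: u_notin; rewrite (is_child_parent_eq uw xw) !inE eqxx orbT.
Qed.

Lemma descending_path_size_last u w s :
  is_child u w -> path word_adj w s -> uniq (u :: w :: s) ->
  size (last w s) = (size u + size s).+1.
Proof.
move=> uw ws uniq_uws; have [-> _] := descending_path_last (saw_descends uw ws uniq_uws).
by rewrite (is_child_size uw).
Qed.

Lemma saw_head_eq u x y s1 s2 :
  path word_adj u (x :: s1) -> uniq (u :: x :: s1) ->
  path word_adj u (y :: s2) -> uniq (u :: y :: s2) ->
  size s1 = size s2 -> last x s1 = last y s2 -> x = y.
Proof.
move=> /= /andP[ux xs1] uniq1 /andP[uy ys2] uniq2 size12 last12.
case/orP: ux => [ux | xu]; case/orP: uy => [uy | yu].
- have [_ take1] := descending_path_last (saw_descends ux xs1 uniq1).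
  have [_ take2] := descending_path_last (saw_descends uy ys2 uniq2).
  by rewrite -take1 -take2 last12 (is_child_size ux) (is_child_size uy).
- have := size_last_word_path ys2.
  rewrite -last12 (descending_path_size_last ux xs1 uniq1) (is_child_size yu); lia.
- have := size_last_word_path xs1.
  rewrite last12 (descending_path_size_last uy ys2 uniq2) (is_child_size xu); lia.
- exact: is_child_parent_eq xu yu.
Qed.

Lemma word_saw_inj u s1 s2 :
  path word_adj u s1 -> uniq (u :: s1) -> path word_adj u s2 -> uniq (u :: s2) ->
  size s1 = size s2 -> last u s1 = last u s2 -> s1 = s2.
Proof.
elim: s1 u s2 => [|x s1 IHs] u [|y s2] //= path1 uniq1 path2 uniq2 [size12] last12.
have xy := saw_head_eq path1 uniq1 path2 uniq2 size12 last12; subst y.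
move: path1 path2 uniq1 uniq2 => /andP[_ xs1] /andP[_ xs2] /andP[_ uniq1] /andP[_ uniq2].
by rewrite (IHs x s2).
Qed.

End WordTree.

Lemma word_inj b k : injective (@word b k).
Proof.
case=> [n t] [m s]; rewrite /word /= => ts.
have nm : n = m by apply: val_inj; rewrite /= -(size_tuple t) -(size_tuple s) ts.
by subst m; rewrite (val_inj ts).
Qed.

Lemma tree_nSAW_le_card b k (v : tree_vertex b k) i :
  nSAW (G := tree_graph b k) v i <= #|tree_vertex b k|.
Proof.
apply: nSAW_le_card => t1 t2; rewrite !inE => /andP[path1 uniq1] /andP[path2 uniq2] last12.
have uniq_word t : uniq (v :: t) -> uniq (word v :: map (@word b k) t).
  by rewrite -(map_cons (@word b k)) (map_inj_uniq (@word_inj b k)).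
apply/val_inj/(inj_map (@word_inj b k)).
apply: (@word_saw_inj _ (word v)); rewrite ?path_map ?uniq_word //.
- by rewrite !size_map !size_tuple.
- by rewrite !last_map last12.
Qed.

Lemma tree_N_le_le_card_sq b k (v : tree_vertex b k) l :
  N_le (G := tree_graph b k) v l <= #|tree_vertex b k| * #|tree_vertex b k|.
Proof.
set n := #|tree_vertex b k|.
have := @sum_nat_bounded_support (nSAW (G := tree_graph b k) v) n 1 l.+1.
move=> /(_ (tree_nSAW_le_card v) (nSAW_eq0 (G := tree_graph b k) v)) /leq_trans.
by apply; rewrite leq_mul2r geq_minr orbT.
Qed.

Lemma sq_le_pow_of_log_le (d x : R) (l : nat) :
  (1 < d)%R -> (0 < x)%R -> (2 / ln d * ln x <= INR l)%R -> (x * x <= d ^ l)%R.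
Proof.
move=> d_gt1 x_gt0 log_le.
have lnd_gt0 : (0 < ln d)%R by rewrite -ln_1; apply: ln_increasing; lra.
have -> : (x * x = Rpower d (2 / ln d * ln x))%R.
  by rewrite /Rpower -{1 2}(exp_ln _ x_gt0) -exp_plus; congr exp; field; lra.
by rewrite -Rpower_pow; [apply: Rle_Rpower => //; lra | lra].
Qed.

Theorem lemma3p1 (Delta : nat) (d : R) :
  (3 <= Delta)%N -> (1 < d)%R ->
  mu_log_le (fun G => exists k : nat, (1 <= k)%N /\ G = tree_graph (Delta - 1) k) d.
Proof.
move=> _ d_gt1; exists (2 / ln d)%R, 1%R => G [k [_ ->]] v l log_le.
rewrite Rmult_1_l; set n := #|tree_vertex (Delta - 1) k|.
have n_gt0 : (0 < INR n)%R by apply/lt_0_INR/ltP/card_gt0P; exists v.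
apply: Rle_trans (sq_le_pow_of_log_le d_gt1 n_gt0 log_le).
by rewrite -mult_INR; apply/le_INR/leP/tree_N_le_le_card_sq.
Qed.
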